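(* Let $\mathcal{S},\mathcal{T}\subset\mathbb{P}$ be nonempty subsets which are each totally ordered with respect to the Loewner order, and suppose $\mathcal{S}$ has a maximum element $M$ and $\mathcal{T}$ has a maximum element $N$. Then $$M\# N=\max\Big\{X\in\mathbb{H}:\ \begin{pmatrix}A & X\\ X & B\end{pmatrix}\geq 0 \text{ for some } A\in\mathcal{S},\ B\in\mathcal{T}\Big\},$$ where the maximum is taken with respect to the Loewner order.
   Context: $\mathbb{H}$ denotes the real vector space of $n\times n$ complex Hermitian matrices and $\mathbb{P}\subset\mathbb{H}$ the open cone of positive definite matrices. The Loewner order: $A\leq B$ iff $B-A$ is positive semidefinite. For $A,B\in\mathbb{P}$ and $t\in[0,1]$, $A\#_t B:=A^{1/2}(A^{-1/2}BA^{-1/2})^tA^{1/2}$ and $A\# B:=A\#_{1/2}B$. *)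

From HB Require Import structures.
From mathcomp Require Import all_boot all_order all_algebra.
From mathcomp Require Import sesquilinear spectral complex reals.
From Stdlib Require Import ClassicalEpsilon.
Set Implicit Arguments. Unset Strict Implicit. Unset Printing Implicit Defensive.
Import Order.TTheory GRing.Theory Num.Theory.
Local Open Scope ring_scope.
Local Open Scope sesquilinear_scope.

Section Defs.
Variable C : numClosedFieldType.

Definition is_hermitian n (A : 'M[C]_n) : Prop := A ^t* = A.

Definition psdmx n (A : 'M[C]_n) : Prop :=
  is_hermitian A /\ forall x : 'cV[C]_n, 0 <= (x ^t* *m A *m x) 0 0.

Definition pdmx n (A : 'M[C]_n) : Prop :=
  is_hermitian A /\ forall x : 'cV[C]_n, x != 0 -> 0 < (x ^t* *m A *m x) 0 0.

Definition loewner_le n (A B : 'M[C]_n) : Prop := psdmx (B - A).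

Definition mx_sqrt n (A : 'M[C]_n) : 'M[C]_n :=
  epsilon (inhabits 0) (fun X : 'M[C]_n => psdmx X /\ X *m X = A).

Definition gmean n (A B : 'M[C]_n) : 'M[C]_n :=
  let Ah := mx_sqrt A in
  let Aih := invmx Ah in
  Ah *m mx_sqrt (Aih *m B *m Aih) *m Ah.

End Defs.

From mathcomp Require Import all_boot all_order all_algebra.
From mathcomp Require Import sesquilinear spectral complex reals.
From mathcomp Require Import ring.
From Stdlib Require Import ClassicalEpsilon.
Set Implicit Arguments. Unset Strict Implicit. Unset Printing Implicit Defensive.
Import Order.TTheory GRing.Theory Num.Theory.
Local Open Scope ring_scope.
Local Open Scope sesquilinear_scope.

(* Write M^{1/2} for the square root of M and Y := (M^{-1/2} N M^{-1/2})^{1/2}, so that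
   M # N = M^{1/2} Y M^{1/2}.  The block matrix [[M, M # N], [M # N, N]] equals Q^* Q with
   Q = [M^{1/2}, Y M^{1/2}], hence is positive.  Conversely, if [[A, X], [X, B]] >= 0 with
   A <= M and B <= N, then [[M, X], [X, N]] >= 0, and the congruence by
   M^{-1/2} (+) M^{-1/2} turns it into [[1, Z], [Z, Y^2]] >= 0 with Z = M^{-1/2} X M^{-1/2};
   its Schur complement gives Z^2 <= Y^2.  An eigenvector v of Y - Z for an eigenvalue
   l < 0 would give v^* (Y^2 - Z^2) v = l (2 v^* Y v - l v^* v) < 0, so Z <= Y, and the
   congruence by M^{1/2} yields X <= M # N. *)

Section Hermitian.
Variable C : numClosedFieldType.
Implicit Types (m n : nat) (l : C).

Definition qform n (A : 'M[C]_n) (x : 'cV[C]_n) : C := (x ^t* *m A *m x) 0 0.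

Lemma trmxC_mul m n p (A : 'M[C]_(m, n)) (B : 'M[C]_(n, p)) :
  (A *m B) ^t* = B ^t* *m A ^t*.
Proof. by rewrite trmx_mul map_mxM. Qed.

Lemma hermitianD n (A B : 'M[C]_n) :
  is_hermitian A -> is_hermitian B -> is_hermitian (A + B).
Proof. by move=> hA hB; rewrite /is_hermitian linearD map_mxD hA hB. Qed.

Lemma hermitianB n (A B : 'M[C]_n) :
  is_hermitian A -> is_hermitian B -> is_hermitian (A - B).
Proof. by move=> hA hB; rewrite /is_hermitian linearB map_mxB hA hB. Qed.

Lemma hermitian_congr m n (P : 'M[C]_(m, n)) (D : 'M[C]_m) :
  is_hermitian D -> is_hermitian (P ^t* *m D *m P).
Proof. by move=> hD; rewrite /is_hermitian !trmxC_mul trmxCK hD mulmxA. Qed.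

Lemma qformD n (A B : 'M[C]_n) x : qform (A + B) x = qform A x + qform B x.
Proof. by rewrite /qform mulmxDr mulmxDl mxE. Qed.

Lemma qform_congr m n (P : 'M[C]_(m, n)) (D : 'M[C]_m) x :
  qform (P ^t* *m D *m P) x = qform D (P *m x).
Proof. by rewrite /qform trmxC_mul !mulmxA. Qed.

Lemma qform_conj n (A : 'M[C]_n) x : is_hermitian A -> (qform A x)^* = qform A x.
Proof.
move=> hA; rewrite /qform.
have -> : ((x ^t* *m A *m x) 0 0)^* = ((x ^t* *m A *m x) ^t*) 0 0 by rewrite !mxE.
by rewrite !trmxC_mul trmxCK hA mulmxA.
Qed.

Lemma qform1E n (x : 'cV[C]_n) : qform 1%:M x = \sum_k x k 0 * (x k 0)^*.
Proof. by rewrite /qform mulmx1 mxE; apply: eq_bigr => k _; rewrite !mxE mulrC. Qed.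

Lemma qform1_gt0 n (x : 'cV[C]_n) : x != 0 -> 0 < qform 1%:M x.
Proof.
move=> nx; have ge0 k : 0 <= x k 0 * (x k 0)^* by exact: mul_conjC_ge0.
rewrite qform1E lt_def sumr_ge0 // andbT; apply: contra nx => /eqP x0.
apply/eqP/matrixP => k j; rewrite ord1 mxE; apply/eqP.
by rewrite -mul_conjC_eq0 (psumr_eq0P _ x0).
Qed.

Lemma qform_eigen n (A : 'M[C]_n) v l :
  A *m v = l *: v -> qform A v = l * qform 1%:M v.
Proof. by move=> Av; rewrite /qform -mulmxA Av -scalemxAr mxE mulmx1. Qed.

Lemma psdmx1 n : psdmx (1%:M : 'M[C]_n).
Proof.
split; first by rewrite /is_hermitian trmx1 map_mx1.
by move=> x; rewrite -/(qform _ x) qform1E sumr_ge0 // => k _; exact: mul_conjC_ge0.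
Qed.

Lemma psdmxD n (A B : 'M[C]_n) : psdmx A -> psdmx B -> psdmx (A + B).
Proof.
move=> [hA qA] [hB qB]; split; first exact: hermitianD.
by move=> x; rewrite -/(qform _ x) qformD; exact: addr_ge0 (qA x) (qB x).
Qed.

Lemma psdmx_congr m n (P : 'M[C]_(m, n)) (D : 'M[C]_m) :
  psdmx D -> psdmx (P ^t* *m D *m P).
Proof.
move=> [hD qD]; split; first exact: hermitian_congr.
by move=> x; rewrite -/(qform _ x) qform_congr; apply: qD.
Qed.

Lemma loewner_le_congr m n (P : 'M[C]_(m, n)) (A B : 'M[C]_m) :
  loewner_le A B -> loewner_le (P ^t* *m A *m P) (P ^t* *m B *m P).
Proof. by move=> /(psdmx_congr P); rewrite mulmxBr mulmxBl. Qed.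

Lemma psdmx_diag n (d : 'rV[C]_n) : (forall k, 0 <= d 0 k) -> psdmx (diag_mx d).
Proof.
move=> d_ge0; split.
  rewrite /is_hermitian tr_diag_mx map_diag_mx; congr diag_mx.
  by apply/matrixP => i k; rewrite mxE ord1; apply: geC0_conj.
move=> x; rewrite mul_mx_diag mxE sumr_ge0 // => k _.
by rewrite !mxE mulrAC mulr_ge0 // mulrC mul_conjC_ge0.
Qed.

Lemma pdmx_psdmx n (A : 'M[C]_n) : pdmx A -> psdmx A.
Proof.
move=> [hA qA]; split => // x.
have [->|nx] := eqVneq x 0; last exact: ltW (qA x nx).
by rewrite mulmx0 mxE.
Qed.

Lemma pdmx_unit n (A : 'M[C]_n) : pdmx A -> A \in unitmx.
Proof.
move=> [hA qA]; rewrite -row_free_unit -kermx_eq0; apply/eqP/row_matrixP => i.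
rewrite row0; set u := row i (kermx A); apply/eqP/negPn/negP => nu.
have uA : u *m A = 0 by rewrite /u -row_mul mulmx_ker row0.
have Au : A *m u ^t* = 0 by rewrite -{1}hA -trmxC_mul uA trmx0 map_mx0.
have nx : u ^t* != 0.
  by apply: contra nu => /eqP u0; rewrite -[u]trmxCK u0 trmx0 map_mx0.
by have := qA _ nx; rewrite -mulmxA Au mulmx0 mxE ltxx.
Qed.

Lemma hermitian_eigenvalue_real n (A : 'M[C]_n) (v : 'cV[C]_n) l :
  is_hermitian A -> v != 0 -> A *m v = l *: v -> l \is Num.real.
Proof.
move=> hA nv Av; have s_gt0 := qform1_gt0 nv.
apply/CrealP/(mulIf (lt0r_neq0 s_gt0)).
rewrite -(qform_eigen Av) -[qform A v]qform_conj // (qform_eigen Av).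
by rewrite rmorphM /= (geC0_conj (ltW s_gt0)).
Qed.

Lemma psdmx_eigenvalue_ge0 n (A : 'M[C]_n) (v : 'cV[C]_n) l :
  psdmx A -> v != 0 -> A *m v = l *: v -> 0 <= l.
Proof.
move=> [_ qA] nv Av; by rewrite -(pmulr_lge0 _ (qform1_gt0 nv)) -(qform_eigen Av); apply: qA.
Qed.

Section Spectral.
Variables (n : nat) (H : 'M[C]_n).
Hypothesis hH : is_hermitian H.
Local Notation P := (spectralmx H).
Local Notation d := (spectral_diag H).
Local Notation e k := (P ^t* *m (delta_mx k 0 : 'cV[C]_n)).

Lemma hermitian_spectralE : H = P ^t* *m diag_mx d *m P.
Proof.
have /orthomx_spectralP HE : H \is normalmx by apply/normalmxP; rewrite hH.
by rewrite [LHS]HE invmx_unitary // spectral_unitarymx.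
Qed.

Lemma spectral_eigenvector k : H *m e k = d 0 k *: e k.
Proof.
rewrite {1}hermitian_spectralE -!mulmxA (mulmxA P) (unitarymxP (spectral_unitarymx H)).
rewrite mul1mx scalemxAr; congr (_ *m _).
apply/matrixP => i j; rewrite mul_diag_mx !mxE.
by case: (eqVneq i k) => [->|]; rewrite ?mulr1 ?mulr0.
Qed.

Lemma spectral_eigenvector_neq0 k : e k != 0.
Proof.
apply/eqP => /(congr1 (mulmx P)); rewrite mulmxA (unitarymxP (spectral_unitarymx H)).
by rewrite mul1mx mulmx0 => /matrixP/(_ k 0)/eqP; rewrite !mxE !eqxx oner_eq0.
Qed.

Lemma psdmx_eigen :
  (forall (v : 'cV[C]_n) l, v != 0 -> H *m v = l *: v -> 0 <= l) -> psdmx H.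
Proof.
move=> eig_ge0; rewrite hermitian_spectralE; apply/psdmx_congr/psdmx_diag => k.
exact: eig_ge0 (spectral_eigenvector_neq0 k) (spectral_eigenvector k).
Qed.

End Spectral.

Lemma psdmx_sqrt_exists n (A : 'M[C]_n) : psdmx A -> exists S, psdmx S /\ S *m S = A.
Proof.
move=> psdA; have hA := proj1 psdA.
pose P := spectralmx A; pose d := spectral_diag A.
have d_ge0 k : 0 <= d 0 k.
  exact: psdmx_eigenvalue_ge0 psdA (spectral_eigenvector_neq0 _ k) (spectral_eigenvector hA k).
pose s := map_mx sqrtC d.
exists (P ^t* *m diag_mx s *m P); split.
  by apply/psdmx_congr/psdmx_diag => k; rewrite mxE sqrtC_ge0.
rewrite [RHS](hermitian_spectralE hA) -!mulmxA; congr (_ *m _).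
rewrite !mulmxA mulmxtVK ?spectral_unitarymx //; congr (_ *m _).
apply/matrixP => i j; rewrite mul_diag_mx !mxE.
by case: (eqVneq i j) => [->|]; rewrite ?mulr1n ?mulr0n ?mulr0 // -expr2 sqrtCK.
Qed.

Lemma mx_sqrt_spec n (A : 'M[C]_n) :
  psdmx A -> psdmx (mx_sqrt A) /\ mx_sqrt A *m mx_sqrt A = A.
Proof. by move=> /psdmx_sqrt_exists; apply: epsilon_spec. Qed.

Lemma psdmx_block_diag m n (A : 'M[C]_m) (B : 'M[C]_n) :
  psdmx A -> psdmx B -> psdmx (block_mx A 0 0 B).
Proof.
move=> psdA psdB.
have -> : block_mx A 0 0 B = (row_mx 1%:M 0) ^t* *m A *m row_mx 1%:M 0
                          + (row_mx 0 1%:M) ^t* *m B *m row_mx 0 1%:M.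
  rewrite !tr_row_mx !map_col_mx !trmx1 !map_mx1 !trmx0 !map_mx0.
  rewrite !mul_col_mx !mul1mx !mul0mx !mul_mx_row !mulmx1 !mulmx0 -[X in col_mx _ X]row_mx0.
  by rewrite -[X in _ + col_mx X _]row_mx0 add_col_mx !add_row_mx !(addr0, add0r).
exact: psdmxD (psdmx_congr _ psdA) (psdmx_congr _ psdB).
Qed.

Lemma psdmx_block1_schur n (Z W : 'M[C]_n) :
  is_hermitian Z -> psdmx (block_mx 1%:M Z Z W) -> loewner_le (Z *m Z) W.
Proof.
move=> hZ /(psdmx_congr (col_mx (- Z) 1%:M)).
rewrite tr_col_mx map_row_mx linearN map_mxN hZ trmx1 map_mx1.
by rewrite mul_row_block mul_row_col !(mulmx1, mul1mx) addNr mul0mx add0r mulNmx addrC.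
Qed.

Lemma loewner_le_of_sqr n (Y Z : 'M[C]_n) :
  psdmx Y -> is_hermitian Z -> loewner_le (Z *m Z) (Y *m Y) -> loewner_le Z Y.
Proof.
move=> [hY qY] hZ [_ qYZ]; have hYZ := hermitianB hY hZ.
apply: psdmx_eigen => // v l nv YZv.
have l_real := hermitian_eigenvalue_real hYZ nv YZv.
have Zv : Z *m v = Y *m v - l *: v by rewrite -YZv mulmxBl opprB addrC subrK.
have vZ : v ^t* *m Z = v ^t* *m Y - l *: v ^t*.
  have := congr1 (fun A => A ^t*) Zv.
  by rewrite trmxC_mul hZ linearB map_mxB linearZ map_mxZ trmxC_mul hY /= conj_Creal.
set q := v ^t* *m Y *m v; set s := v ^t* *m v.
have ZZ : v ^t* *m (Z *m Z) *m v = v ^t* *m (Y *m Y) *m v - l *: q - l *: (q - l *: s).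
  rewrite mulmxA -(mulmxA _ Z v) Zv mulmxBr vZ mulmxBl -scalemxAr.
  by rewrite mulmxBl -!scalemxAl !mulmxA.
have q_ge0 : 0 <= q 0 0 := qY v.
have s_gt0 : 0 < s 0 0 by have := qform1_gt0 nv; rewrite /qform mulmx1.
have := qYZ v; rewrite mulmxBr mulmxBl ZZ; set y := _ *m _ *m v.
(* opaque [y q s] keep [mxE] from expanding their entries into sums *)
clearbody y q s; rewrite !mxE.
have -> : y 0 0 - (y 0 0 - l * q 0 0 - l * (q 0 0 - l * s 0 0))
          = l * q 0 0 + l * (q 0 0 - l * s 0 0) by ring.
move=> YZ_ge0; rewrite real_leNgt //; apply/negP => l_lt0.
have lqs_lt0 : l * (q 0 0 - l * s 0 0) < 0.
  by rewrite nmulr_rlt0 // subr_gt0 (lt_le_trans _ q_ge0) // nmulr_rlt0.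
have := ler_ltD (mulr_le0_ge0 (ltW l_lt0) q_ge0) lqs_lt0.
by rewrite addr0 => /lt_geF; rewrite YZ_ge0.
Qed.

Lemma hermitian_invmx n (A : 'M[C]_n) : is_hermitian A -> is_hermitian (invmx A).
Proof. by move=> hA; rewrite /is_hermitian trmx_inv map_invmx hA. Qed.

Section GeometricMean.
Variables (n : nat) (M N : 'M[C]_n).
Hypotheses (pdM : pdmx M) (pdN : pdmx N).
Local Notation Mh := (mx_sqrt M).
Local Notation Mi := (invmx (mx_sqrt M)).
Local Notation W := (Mi *m N *m Mi).
Local Notation Y := (mx_sqrt W).

Let sqrtM_spec := mx_sqrt_spec (pdmx_psdmx pdM).
Let hMh : Mh ^t* = Mh := proj1 sqrtM_spec.1.
Let MhMh : Mh *m Mh = M := sqrtM_spec.2.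
Let hMi : Mi ^t* = Mi := hermitian_invmx hMh.

Let Mh_unit : Mh \in unitmx.
Proof. by have := pdmx_unit pdM; rewrite -{1}MhMh unitmx_mul => /andP[]. Qed.

Let MiMMi : Mi *m M *m Mi = 1%:M.
Proof. by rewrite -[X in _ *m X *m _]MhMh mulmxA mulVmx // mul1mx mulmxV. Qed.

Let psdW : psdmx W.
Proof. by rewrite -[in X in X *m N]hMi; apply: psdmx_congr; apply: pdmx_psdmx. Qed.

Let sqrtW_spec := mx_sqrt_spec psdW.
Let hY : Y ^t* = Y := proj1 sqrtW_spec.1.

Lemma gmean_hermitian : is_hermitian (gmean M N).
Proof.
have -> : gmean M N = Mh ^t* *m Y *m Mh by rewrite hMh.
exact/hermitian_congr/hY.
Qed.

Lemma gmean_block_psdmx : psdmx (block_mx M (gmean M N) (gmean M N) N).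
Proof.
set Q := row_mx Mh (Y *m Mh).
have -> : block_mx M (gmean M N) (gmean M N) N = Q ^t* *m 1%:M *m Q.
  rewrite mulmx1 /Q tr_row_mx map_col_mx -/(Mh ^t*) -/((Y *m Mh) ^t*).
  rewrite trmxC_mul hMh hY mul_col_row MhMh !mulmxA -(mulmxA Mh Y Y) sqrtW_spec.2.
  by rewrite !mulmxA mulmxKV // mulmxV // mul1mx.
exact: psdmx_congr (psdmx1 _).
Qed.

Lemma gmean_maximal X A B : is_hermitian X -> loewner_le A M -> loewner_le B N ->
  psdmx (block_mx A X X B) -> loewner_le X (gmean M N).
Proof.
move=> hX leAM leBN psdAXB.
have psdMXN : psdmx (block_mx M X X N).
  have -> : block_mx M X X N = block_mx A X X B + block_mx (M - A) 0 0 (N - B).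
    by rewrite add_block_mx !addr0 !subrKC.
  exact: psdmxD psdAXB (psdmx_block_diag leAM leBN).
set Z := Mi *m X *m Mi.
have hZ : is_hermitian Z by rewrite /Z -[in X in X *m _]hMi; apply: hermitian_congr.
have psd1ZW : psdmx (block_mx 1%:M Z Z W).
  have := psdmx_congr (block_mx Mi 0 0 Mi) psdMXN.
  rewrite tr_block_mx map_block_mx !trmx0 !map_mx0 hMi !mulmx_block.
  by rewrite !(mulmx0, mul0mx, addr0, add0r) MiMMi.
have Z_le_Y : loewner_le Z Y.
  apply: (loewner_le_of_sqr sqrtW_spec.1 hZ).
  by rewrite sqrtW_spec.2; exact: psdmx_block1_schur psd1ZW.
have := loewner_le_congr Mh Z_le_Y; rewrite hMh.
by rewrite /Z !mulmxA mulmxV // mul1mx -mulmxA mulVmx // mulmx1.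
Qed.

End GeometricMean.

End Hermitian.

Local Close Scope sesquilinear_scope.

Theorem proposition3p3 (R : realType) (n : nat)
  (S T : 'M[R[i]]_n -> Prop) (M N : 'M[R[i]]_n) :
  (forall A, S A -> pdmx A) -> (forall B, T B -> pdmx B) ->
  (exists A, S A) -> (exists B, T B) ->
  (forall A1 A2, S A1 -> S A2 -> loewner_le A1 A2 \/ loewner_le A2 A1) ->
  (forall B1 B2, T B1 -> T B2 -> loewner_le B1 B2 \/ loewner_le B2 B1) ->
  S M -> (forall A, S A -> loewner_le A M) ->
  T N -> (forall B, T B -> loewner_le B N) ->
  let F := fun X : 'M[R[i]]_n =>
    is_hermitian X /\
    exists A B, S A /\ T B /\ psdmx (block_mx A X X B) in
  F (gmean M N) /\ (forall X, F X -> loewner_le X (gmean M N)).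
Proof.
move=> pdS pdT _ _ _ _ SM le_SM TN le_TN F.
have [pdM pdN] := (pdS M SM, pdT N TN).
split.
  split; first exact: gmean_hermitian.
  by exists M, N; split; [|split; [|exact: gmean_block_psdmx]].
move=> X [hX [A [B [SA [TB psdAXB]]]]].
exact: gmean_maximal hX (le_SM A SA) (le_TN B TB) psdAXB.
Qed.
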